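(* Let $R$ be a ring and $n\in\{0,1,2,\dots\}\cup\{\infty\}$. The following are equivalent: (1) $l.\mathrm{fPD}(R)\leq n$; (2) $\mathscr{E}_{n}=\mathscr{E}_{n+1}$; (3) $\mathscr{E}_{n}=\mathscr{E}_{m}$ for some $m>n$; (4) $\mathscr{E}_{n}=\mathscr{E}_{m}$ for every $m>n$; (5) $\mathscr{E}_{n}=\mathscr{E}_{\infty}$.
   Context: $R$ is an associative ring with identity; modules are left $R$-modules; $\infty+1=\infty$. For a positive integer $k$, $\mathcal{P}^{<k}$ is the class of modules $M$ admitting an exact sequence $0\to P_j\to\cdots\to P_0\to M\to 0$ with $j\le k-1$ and every $P_i$ finitely generated projective; $\mathcal{P}^{<0}=\{0\}$; $\mathcal{P}^{<\infty}$ is the class of modules admitting such a sequence for some finite $j$. $l.\mathrm{fPD}(R)$ is the supremum of projective dimensions of modules in $\mathcal{P}^{<\infty}$. A short exact sequence $0\to A\to B\to C\to 0$ is $n$-exact if $0\to\mathrm{Hom}_R(M,A)\to\mathrm{Hom}_R(M,B)\to\mathrm{Hom}_R(M,C)\to0$ is exact for all $M\in\mathcal{P}^{<n+1}$; $\mathscr{E}_n$ denotes the class of all $n$-exact sequences. *)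

From HB Require Import structures.
From mathcomp Require Import all_boot all_order all_algebra.
Set Implicit Arguments. Unset Strict Implicit. Unset Printing Implicit Defensive.
Import GRing.Theory.
Local Open Scope ring_scope.

Inductive enat := Fin of nat | Inf.

Definition esucc (n : enat) : enat :=
  match n with Fin k => Fin k.+1 | Inf => Inf end.

Definition ele (a b : enat) : Prop :=
  match a, b with
  | _, Inf => True
  | Inf, Fin _ => False
  | Fin x, Fin y => (x <= y)%N
  end.

Section Modules.
Variable R : pzRingType.

Definition fin_gen (M : lmodType R) : Prop :=
  exists s : seq M, forall x : M,
    exists c : 'I_(size s) -> R, x = \sum_(i < size s) c i *: s`_i.

Definition surj {A B : lmodType R} (f : A -> B) : Prop :=
  forall y, exists x, f x = y.

Definition projective (P : lmodType R) : Prop :=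
  forall (B C : lmodType R) (g : {linear B -> C}) (h : {linear P -> C}),
    surj g -> exists k : {linear P -> B}, forall x, g (k x) = h x.

Definition fg_projective (P : lmodType R) : Prop := fin_gen P /\ projective P.

Definition ses {A B C : lmodType R} (f : {linear A -> B}) (g : {linear B -> C}) : Prop :=
  injective f /\ (forall y, g y = 0 <-> exists x, f x = y) /\ surj g.

(* [res Q j M]: an exact sequence 0 -> P_j -> ... -> P_0 -> M -> 0 with every
   P_i satisfying Q, encoded by splitting it into short exact sequences
   0 -> K -> P_0 -> M -> 0 with K having such a sequence of length j-1. *)
Fixpoint res (Q : lmodType R -> Prop) (j : nat) (M : lmodType R) : Prop :=
  match j with
  | 0 => exists (P : lmodType R) (f : {linear P -> M}),
           Q P /\ injective f /\ surj f
  | j'.+1 => exists (K P : lmodType R) (g : {linear K -> P}) (f : {linear P -> M}),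
           Q P /\ ses g f /\ res Q j' K
  end.

Definition P_lt (k : enat) (M : lmodType R) : Prop :=
  match k with
  | Fin 0 => forall x : M, x = 0
  | Fin k'.+1 => exists j, (j <= k')%N /\ res fg_projective j M
  | Inf => exists j, res fg_projective j M
  end.

Definition pd_le (d : enat) (M : lmodType R) : Prop :=
  match d with
  | Fin d' => exists j, (j <= d')%N /\ res projective j M
  | Inf => True
  end.

Definition lfPD_le (n : enat) : Prop :=
  forall M : lmodType R, P_lt Inf M -> pd_le n M.

(* Exactness of 0 -> Hom(M,A) -> Hom(M,B) -> Hom(M,C) -> 0. *)
Definition hom_exact (M : lmodType R) {A B C : lmodType R}
    (f : {linear A -> B}) (g : {linear B -> C}) : Prop :=
  [/\ (forall k1 k2 : {linear M -> A},
          (forall x, f (k1 x) = f (k2 x)) -> forall x, k1 x = k2 x),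
      (forall h : {linear M -> B},
          (forall x, g (h x) = 0) <-> exists k : {linear M -> A}, forall x, f (k x) = h x)
    & (forall h : {linear M -> C}, exists k : {linear M -> B}, forall x, g (k x) = h x)].

Definition n_exact (n : enat) {A B C : lmodType R}
    (f : {linear A -> B}) (g : {linear B -> C}) : Prop :=
  ses f g /\ forall M : lmodType R, P_lt (esucc n) M -> hom_exact M f g.

Definition E_eq (n m : enat) : Prop :=
  forall (A B C : lmodType R) (f : {linear A -> B}) (g : {linear B -> C}),
    n_exact n f g <-> n_exact m f g.

End Modules.

(* If l.fPD(R) <= n, every module of P^{<oo} has a finitely generated projective
   resolution whose n-th syzygy is projective (Schanuel), so P^{<oo} = P^{<n+1}
   and all the classes E_m, m > n, are equal to E_n.
   Conversely, let B be the direct sum of one copy of N for each map N -> M with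
   N in P^{<n+1}; every such map lifts to B, so 0 -> ker -> B -> M -> 0 is
   n-exact.  If E_n = E_{n+1} it is (n+1)-exact, so for M in P^{<n+2} the
   identity of M lifts to B.  As M is finitely generated, the lift meets only
   finitely many summands, so M is a retract of a finite sum of modules of
   projective dimension <= n, and a Schanuel-type argument puts M in P^{<n+1}.
   Induction on the length of a resolution then gives P^{<oo} = P^{<n+1}. *)

From HB Require Import structures.
From mathcomp Require Import all_boot all_order all_algebra.
From mathcomp Require Import boolp.
Set Implicit Arguments. Unset Strict Implicit. Unset Printing Implicit Defensive.
Import GRing.Theory.
Local Open Scope ring_scope.

Section LinearMaps.
Variable R : pzRingType.
Implicit Types U V W : lmodType R.

Definition linear_of U V (f : U -> V) (fL : linear f) : {linear U -> V} :=
  HB.pack f (GRing.isLinear.Build R U V *:%R f fL).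

Lemma lift_through_injective U V W (g : {linear V -> W}) (f : {linear U -> W}) :
    injective g -> (forall x, exists y, g y = f x) ->
  exists k : {linear U -> V}, forall x, g (k x) = f x.
Proof.
move=> g_inj f_img; pose k x := projT1 (cid (f_img x)).
have kE x : g (k x) = f x by rewrite /k; case: cid.
have kL : linear k by move=> a u v; apply: g_inj; rewrite linearP !kE linearP.
by exists (linear_of kL) => x; apply: kE.
Qed.

Lemma ses_comp_eq0 U V W (g : {linear U -> V}) (f : {linear V -> W}) x :
  ses g f -> f (g x) = 0.
Proof. by case=> _ [gf _]; apply/gf; exists x. Qed.

Lemma fin_gen_surj U V (f : {linear U -> V}) : fin_gen U -> surj f -> fin_gen V.
Proof.
case=> s s_span f_surj; exists (map f s) => y; have [x <-] := f_surj y.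
have [c ->] := s_span x; rewrite size_map linear_sum; exists c.
by apply: eq_bigr => i _; rewrite linearZ (nth_map 0).
Qed.

End LinearMaps.

Section LinearCombinations.
Variable R : pzRingType.
Implicit Types U V : lmodType R.

Definition lincomb V (y : seq V) (c : nat -> R) : V := \sum_(k < size y) c k *: y`_k.

Definition spans V (y : seq V) := forall v, exists c, v = lincomb y c.

Lemma lincombDZ V (y : seq V) a c d :
  lincomb y (fun k => a * c k + d k) = a *: lincomb y c + lincomb y d.
Proof.
rewrite /lincomb scaler_sumr -big_split; apply: eq_bigr => k _.
by rewrite scalerDl scalerA.
Qed.

Lemma lincombB V (y : seq V) c d :
  lincomb y (fun k => c k - d k) = lincomb y c - lincomb y d.
Proof.
rewrite /lincomb -sumrB; apply: eq_bigr => k _.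
by rewrite scalerBl.
Qed.

Lemma lincomb_map U V (f : {linear U -> V}) (y : seq U) c :
  lincomb (map f y) c = f (lincomb y c).
Proof.
by rewrite /lincomb linear_sum size_map; apply: eq_bigr => k _; rewrite linearZ (nth_map 0).
Qed.

Lemma fin_gen_spans V : fin_gen V -> exists y : seq V, spans y.
Proof.
case=> y y_span; exists y => v; have [c ->] := y_span v.
exists (fun k => if insub k is Some i then c i else 0).
by apply: eq_bigr => i _; rewrite valK.
Qed.

Lemma extend_generators U V (y : seq U) (z : seq V) :
    spans y -> (forall c, lincomb y c = 0 -> lincomb z c = 0) ->
  exists f : {linear U -> V}, forall c, f (lincomb y c) = lincomb z c.
Proof.
move=> y_span yz.
have zE c d : lincomb y c = lincomb y d -> lincomb z c = lincomb z d.
  move=> /eqP; rewrite -subr_eq0 -lincombB => /eqP/yz.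
  by rewrite lincombB => /eqP; rewrite subr_eq0 => /eqP.
pose coef u := projT1 (cid (y_span u)).
have coefE u : u = lincomb y (coef u) by rewrite /coef; case: cid.
have fL : linear (fun u => lincomb z (coef u)).
  by move=> a u v; rewrite -lincombDZ; apply: zE; rewrite lincombDZ -!coefE.
by exists (linear_of fL) => c; apply: zE; rewrite -coefE.
Qed.

End LinearCombinations.

Section Kernel.
Variables (R : pzRingType) (U V : lmodType R) (g : {linear U -> V}).

Definition ker_pred : {pred U} := fun x => g x == 0.

Lemma ker_pred_closed : subsemimod_closed ker_pred.
Proof.
split; [split|]; first by rewrite unfold_in /= linear0.
  by move=> x y; rewrite !unfold_in /= linearD => /eqP-> /eqP->; rewrite addr0.
by move=> a x; rewrite !unfold_in /= => /eqP gx0; rewrite linearZ_LR gx0 scaler0.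
Qed.
HB.instance Definition _ := GRing.isSubmodClosed.Build R U ker_pred ker_pred_closed.

Record kernel := Kernel { kernel_val : U; _ : kernel_val \in ker_pred }.
HB.instance Definition _ := [isSub for kernel_val].
HB.instance Definition _ := [Choice of kernel by <:].
HB.instance Definition _ := [SubChoice_isSubLmodule of kernel by <:].

Definition kernel_incl : {linear kernel -> U} := val.

Lemma ses_kernel : surj g -> ses kernel_incl g.
Proof.
move=> g_surj; split; [exact: val_inj | split=> // y].
split=> [gy0 | [x <-]]; last exact/eqP/(valP x).
by exists (Kernel (introT eqP gy0)).
Qed.

End Kernel.

Lemma eq_big_supp (I : eqType) (V : nmodType) (s1 s2 : seq I) (G : I -> V) :
    uniq s1 -> uniq s2 -> (forall i, G i != 0 -> (i \in s1) = (i \in s2)) ->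
  \sum_(i <- s1) G i = \sum_(i <- s2) G i.
Proof.
move=> s1_uniq s2_uniq s12; apply: perm_big_supp; apply: uniq_perm; rewrite ?filter_uniq //.
by move=> i; rewrite !mem_filter; case: (boolP (G i != 0)) => // /s12 ->.
Qed.

Section DirectSum.
Variables (R : pzRingType) (I : choiceType) (N : I -> lmodType R).

Definition dfun := forall i, N i.
HB.instance Definition _ := Choice.copy dfun (forall i, N i).

Let dfunP (x y : dfun) : (forall i, x i = y i) -> x = y.
Proof. exact: functional_extensionality_dep. Qed.

Let add (x y : dfun) : dfun := fun i => x i + y i.
Let addA : associative add.
Proof. by move=> x y z; apply: dfunP => i; rewrite /add addrA. Qed.
Let addC : commutative add.
Proof. by move=> x y; apply: dfunP => i; rewrite /add addrC. Qed.
Let add0 : left_id (fun i => 0) add.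
Proof. by move=> x; apply: dfunP => i; rewrite /add add0r. Qed.
Let addN : left_inverse (fun i => 0) (fun x : dfun => fun i => - x i) add.
Proof. by move=> x; apply: dfunP => i; rewrite /add addNr. Qed.
HB.instance Definition _ := GRing.isZmodule.Build dfun addA addC add0 addN.

Let scale a (x : dfun) : dfun := fun i => a *: x i.
Let scaleA a b x : scale a (scale b x) = scale (a * b) x.
Proof. by apply: dfunP => i; rewrite /scale scalerA. Qed.
Let scale1 : left_id 1 scale.
Proof. by move=> x; apply: dfunP => i; rewrite /scale scale1r. Qed.
Let scaleDr : right_distributive scale +%R.
Proof. by move=> a x y; apply: dfunP => i; rewrite /scale scalerDr. Qed.
Let scaleDl x : {morph scale^~ x : a b / a + b}.
Proof. by move=> a b; apply: dfunP => i; rewrite /scale scalerDl. Qed.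
HB.instance Definition _ := GRing.Zmodule_isLmodule.Build R dfun scaleA scale1 scaleDr scaleDl.

Lemma dfunD (x y : dfun) i : (x + y) i = x i + y i. Proof. by []. Qed.
Lemma dfunZ a (x : dfun) i : (a *: x) i = a *: x i. Proof. by []. Qed.

Definition finsupp : {pred dfun} :=
  fun x => `[< exists s : seq I, forall i, i \notin s -> x i = 0 >].

Lemma finsupp_closed : subsemimod_closed finsupp.
Proof.
split; [split|].
- by apply/asboolP; exists [::].
- move=> x y /asboolP[s xs] /asboolP[t yt]; apply/asboolP; exists (s ++ t) => i.
  by rewrite mem_cat negb_or dfunD => /andP[/xs -> /yt ->]; rewrite addr0.
move=> a x /asboolP[s xs]; apply/asboolP; exists s => i /xs xi.
by rewrite dfunZ xi scaler0.
Qed.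
HB.instance Definition _ := GRing.isSubmodClosed.Build R dfun finsupp finsupp_closed.

Record dsum := DSum { dsum_val : dfun; _ : dsum_val \in finsupp }.
HB.instance Definition _ := [isSub for dsum_val].
HB.instance Definition _ := [Choice of dsum by <:].
HB.instance Definition _ := [SubChoice_isSubLmodule of dsum by <:].

Definition dproj i (x : dsum) : N i := val x i.
Lemma dproj_is_linear i : linear (dproj i).
Proof. by move=> a x y; rewrite /dproj linearP. Qed.
HB.instance Definition _ i :=
  GRing.isLinear.Build R dsum (N i) *:%R (dproj i) (dproj_is_linear i).

(* A duplicate-free list containing the support, possibly larger than it. *)
Definition dsupp (x : dsum) : seq I := undup (projT1 (cid (asboolW (valP x)))).

Lemma dsupp_uniq x : uniq (dsupp x). Proof. exact: undup_uniq. Qed.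

Lemma dproj_dsupp x i : i \notin dsupp x -> dproj i x = 0.
Proof. by rewrite mem_undup; case: cid => s /= xs /xs. Qed.

Definition dfun_single j (v : N j) : dfun :=
  fun i => if j =P i is ReflectT e then ecast i (N i) e v else 0.

Lemma dfun_single_finsupp j (v : N j) : dfun_single v \in finsupp.
Proof.
apply/asboolP; exists [:: j] => i; rewrite inE eq_sym /dfun_single.
by case: eqP => // ->.
Qed.

Definition dinj j (v : N j) : dsum := DSum (dfun_single_finsupp v).

Lemma dinj_is_linear j : linear (@dinj j).
Proof.
move=> a u v; apply: val_inj; apply: functional_extensionality_dep => i.
rewrite linearP /= !dfunD !dfunZ /dfun_single.
by case: (j =P i) => [e|_]; [case: i / e | rewrite scaler0 addr0].
Qed.
HB.instance Definition _ j :=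
  GRing.isLinear.Build R (N j) dsum *:%R (@dinj j) (@dinj_is_linear j).

Lemma dproj_dinj j (v : N j) : dproj j (dinj v) = v.
Proof. by rewrite /dproj /= /dfun_single; case: eqP => // e; rewrite eq_axiomK. Qed.

Lemma dproj_dinj_neq i j (v : N j) : j != i -> dproj i (dinj v) = 0.
Proof. by rewrite /dproj /= /dfun_single; case: eqP. Qed.

Section Rec.
Variables (M : lmodType R) (h : forall i, {linear N i -> M}).

Definition dsum_rec_fun (x : dsum) : M := \sum_(i <- dsupp x) h i (dproj i x).

Lemma dsum_recE (s : seq I) x : uniq s -> (forall i, i \notin s -> dproj i x = 0) ->
  dsum_rec_fun x = \sum_(i <- s) h i (dproj i x).
Proof.
move=> s_uniq xs; apply: eq_big_supp => // [|i]; first exact: dsupp_uniq.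
move=> Gi; have xi : dproj i x != 0 by apply: contraNneq Gi => ->; rewrite linear0.
have mem_of (t : seq I) : (i \notin t -> dproj i x = 0) -> i \in t.
  by move=> H; apply: contraR xi => /H ->; rewrite eqxx.
by rewrite (mem_of _ (@dproj_dsupp x i)) (mem_of _ (xs i)).
Qed.

Lemma dsum_rec_is_linear : linear dsum_rec_fun.
Proof.
move=> a x y; set s := undup (dsupp x ++ dsupp y ++ dsupp (a *: x + y)).
have cover z : {subset dsupp z <= s} -> forall i, i \notin s -> dproj i z = 0.
  by move=> zs i i_s; apply/dproj_dsupp/(contra (zs i)).
have s_uniq : uniq s := undup_uniq _.
rewrite !(dsum_recE s_uniq) ?scaler_sumr -?big_split.
  by apply: eq_bigr => i _; rewrite !linearP.
all: by apply: cover => i zi; rewrite mem_undup !mem_cat zi ?orbT.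
Qed.
HB.instance Definition _ :=
  GRing.isLinear.Build R dsum M *:%R dsum_rec_fun dsum_rec_is_linear.
Definition dsum_rec : {linear dsum -> M} := dsum_rec_fun.

Lemma dsum_rec_dinj j (v : N j) : dsum_rec (dinj v) = h j v.
Proof.
rewrite [LHS](@dsum_recE [:: j]) // ?big_seq1 ?dproj_dinj // => i.
by rewrite inE eq_sym; apply: dproj_dinj_neq.
Qed.

End Rec.
End DirectSum.

Section LiftableMaps.
Variable R : pzRingType.
Implicit Types U V W P : lmodType R.

(* The lifting property defining projectivity, asked of a map instead of an
   identity: a linear map is liftable iff it factors through a projective. *)
Definition liftable U V (phi : U -> V) : Prop :=
  forall (B C : lmodType R) (p : {linear B -> C}) (h : {linear V -> C}),
    surj p -> exists k : {linear U -> B}, forall x, p (k x) = h (phi x).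

Lemma eq_liftable U V (phi psi : U -> V) : phi =1 psi -> liftable phi -> liftable psi.
Proof.
move=> phi_psi phiL B C p h p_surj; have [k kE] := phiL B C p h p_surj.
by exists k => x; rewrite kE phi_psi.
Qed.

Lemma liftable0 U V : liftable (fun _ : U => 0 : V).
Proof. by move=> B C p h _; exists \0 => x; rewrite !linear0. Qed.

Lemma liftableD U V (phi psi : U -> V) :
  liftable phi -> liftable psi -> liftable (fun x => phi x + psi x).
Proof.
move=> phiL psiL B C p h p_surj.
have [k1 k1E] := phiL B C p h p_surj; have [k2 k2E] := psiL B C p h p_surj.
by exists (k1 \+ k2) => x; rewrite /= !linearD k1E k2E.
Qed.

Lemma liftable_sum U V I (r : seq I) (phi : I -> U -> V) :
  (forall i, liftable (phi i)) -> liftable (fun x => \sum_(i <- r) phi i x).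
Proof.
move=> phiL; elim: r => [|i r IHr].
  by apply: eq_liftable (@liftable0 U V) => x; rewrite big_nil.
by apply: eq_liftable (liftableD (phiL i) IHr) => x; rewrite big_cons.
Qed.

Lemma liftable_compl U V W (phi : U -> V) (f : {linear V -> W}) :
  liftable phi -> liftable (f \o phi).
Proof. by move=> phiL B C p h p_surj; apply: phiL B C p (h \o f) p_surj. Qed.

Lemma liftable_compr U V W (phi : V -> W) (f : {linear U -> V}) :
  liftable phi -> liftable (phi \o f).
Proof.
move=> phiL B C p h p_surj; have [k kE] := phiL B C p h p_surj.
by exists (k \o f) => x; rewrite /= kE.
Qed.

Lemma liftable_through U P V (f : {linear U -> P}) (g : {linear P -> V}) :
  projective P -> liftable (g \o f).
Proof. by move=> P_proj; apply: liftable_compl (liftable_compr f P_proj). Qed.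

Lemma projective_retract P V (r : {linear P -> V}) (s : {linear V -> P}) :
  projective P -> (forall v, r (s v) = v) -> projective V.
Proof. by move=> P_proj rs; apply: eq_liftable (liftable_through s r P_proj). Qed.

Lemma res0_projective V : res (@projective R) 0 V -> projective V.
Proof.
case=> P [f [P_proj [f_inj f_surj]]].
have [s sE] := lift_through_injective (f := idfun) f_inj f_surj.
exact: projective_retract P_proj sE.
Qed.

End LiftableMaps.

Section Syzygies.
Variable R : pzRingType.
Implicit Types K M P : lmodType R.

Fixpoint syzygy_proj (d : nat) M : Prop :=
  match d with
  | 0 => projective M
  | d'.+1 => forall K P (g : {linear K -> P}) (f : {linear P -> M}),
      projective P -> ses g f -> syzygy_proj d' K
  end.

Record pd_factor M (d : nat) := PdFactor {
  pf_mod : lmodType R;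
  pf_in : {linear M -> pf_mod};
  pf_out : {linear pf_mod -> M};
  pf_pd : pd_le (Fin d) pf_mod }.

Definition factor_sum M d (l : seq (pd_factor M d)) (x : M) : M :=
  \sum_(p <- l) pf_out p (pf_in p x).

Lemma factor_sum_cat M d (l1 l2 : seq (pd_factor M d)) x :
  factor_sum (l1 ++ l2) x = factor_sum l1 x + factor_sum l2 x.
Proof. exact: big_cat. Qed.

Section Lift.
Variables (K P M : lmodType R) (g : {linear K -> P}) (f : {linear P -> M}) (d : nat).
Hypotheses (P_proj : projective P) (gf : ses g f).

(* [T] lifts the factor sum of [M] to [P] up to the part [U \o f], which
   factors through [P]; on [K] it restricts to a factor sum of [K]. *)
Definition factor_sum_lift (l : seq (pd_factor M d.+1)) :=
  exists (l' : seq (pd_factor K d)) (T : {linear P -> P}) (U : {linear M -> P}),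
    (forall y, f (T y) + f (U (f y)) = factor_sum l (f y)) /\
    (forall x, T (g x) = g (factor_sum l' x)).

Lemma factor_sum_lift1 (p : pd_factor M d.+1) : factor_sum_lift [:: p].
Proof.
have [g_inj [gf_ker f_surj]] := gf; have [[|j] [jd pres]] := pf_pd p.
  have [U UE] := liftable_through (pf_in p) (pf_out p) (res0_projective pres) idfun f_surj.
  exists [::], \0, U; split=> [y|x]; rewrite /factor_sum ?big_nil ?big_seq1 /=.
    by rewrite linear0 add0r UE.
  by rewrite linear0.
have [L [Q [g' [f' [Q_proj [gf' L_pd]]]]]] := pres; have [g'_inj [gf'_ker f'_surj]] := gf'.
have [rho rhoE] := P_proj (pf_in p \o f) f'_surj.
have [sig sigE] := Q_proj _ _ f (pf_out p \o f') f_surj.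
have [r' r'E] : exists r' : {linear K -> L}, forall x, g' (r' x) = (rho \o g) x.
  apply: lift_through_injective => // x; apply/gf'_ker.
  by rewrite /= rhoE /= (ses_comp_eq0 _ gf) linear0.
have [s' s'E] : exists s' : {linear L -> K}, forall x, g (s' x) = (sig \o g') x.
  apply: lift_through_injective => // x; apply/gf_ker.
  by rewrite /= sigE /= (ses_comp_eq0 _ gf') linear0.
exists [:: PdFactor r' s' (ex_intro _ j (conj jd L_pd))], (sig \o rho), \0.
split=> [y|x]; rewrite /factor_sum !big_seq1 /=.
  by rewrite linear0 addr0 sigE /= rhoE.
by rewrite s'E /= r'E.
Qed.

Lemma factor_sum_lift_seq (l : seq (pd_factor M d.+1)) : factor_sum_lift l.
Proof.
elim: l => [|p l [l2 [T2 [U2 [E2 F2]]]]].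
  exists [::], \0, \0; split=> [y|x]; rewrite /factor_sum !big_nil ?linear0 //.
  by rewrite addr0.
have [l1 [T1 [U1 [E1 F1]]]] := factor_sum_lift1 p.
exists (l1 ++ l2), (T1 \+ T2), (U1 \+ U2); split=> [y|x].
  by rewrite -cat1s factor_sum_cat -E1 -E2 /= !linearD addrACA.
by rewrite factor_sum_cat linearD /= F1 F2.
Qed.

End Lift.

(* A generalised Schanuel lemma: [l] exhibits [M], up to maps factoring through
   projectives, as a retract of a sum of modules of projective dimension <= [d]. *)
Lemma syzygy_proj_of_factor_sum d M (l : seq (pd_factor M d)) :
  liftable (fun x => x - factor_sum l x) -> syzygy_proj d M.
Proof.
elim: d M l => [|d IH] M l idl /=.
  have sumL : liftable (factor_sum l).
    apply: liftable_sum => p; have [j [/[!leqn0]/eqP-> pres]] := pf_pd p.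
    exact: liftable_through (res0_projective pres).
  by apply: eq_liftable (liftableD idl sumL) => x; rewrite subrK.
move=> K P g f P_proj gf; have [g_inj [gf_ker f_surj]] := gf.
have [l' [T [U [TE Tg]]]] := factor_sum_lift_seq P_proj gf l.
have [k kE] := idl _ _ f idfun f_surj.
have fTUk y : f (T y + U (f y) + k (f y)) = f y.
  by rewrite !linearD TE kE /= addrC subrK.
pose tau := idfun \- (T \+ (U \o f) \+ (k \o f)).
have [th thE] : exists th : {linear P -> K}, forall y, g (th y) = tau y.
  by apply: lift_through_injective => // y; apply/gf_ker; rewrite linearB /= fTUk subrr.
apply: (IH K l'); apply: eq_liftable (liftable_through g th P_proj) => x.
by apply: g_inj; rewrite thE /tau /= Tg (ses_comp_eq0 _ gf) !linear0 !addr0 linearB.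
Qed.

Lemma pd_le_syzygy_proj d M : pd_le (Fin d) M -> syzygy_proj d M.
Proof.
move=> M_pd; apply: (@syzygy_proj_of_factor_sum _ _ [:: PdFactor idfun idfun M_pd]).
by apply: eq_liftable (@liftable0 _ M M) => x; rewrite /factor_sum big_seq1 subrr.
Qed.

Lemma fg_res_shorten L M d : res (@fg_projective R) L M -> syzygy_proj d M ->
  exists2 j, (j <= d)%N & res (@fg_projective R) j M.
Proof.
elim: L M d => [|L IH] M [|d] M_res M_syz; try by exists 0.
- exists 0 => //; exists M, idfun; split; last by split=> // y; exists y.
  case: M_res => K [P [g [f [[P_fg _] [gf _]]]]].
  by split=> //; apply: fin_gen_surj P_fg gf.2.2.
have [K [P [g [f [[P_fg P_proj] [gf K_res]]]]]] := M_res.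
have [j jd K_res'] := IH K d K_res (M_syz K P g f P_proj gf).
by exists j.+1 => //; exists K, P, g, f.
Qed.

End Syzygies.

Section FinitePresentations.
Variable R : pzRingType.
Implicit Types M N : lmodType R.

Lemma res_weaken (Q Q' : lmodType R -> Prop) j M :
  (forall P, Q P -> Q' P) -> res Q j M -> res Q' j M.
Proof.
move=> QQ'; elim: j M => [|j IH] M /=.
  by case=> P [f [QP f_iso]]; exists P, f; split=> //; apply: QQ'.
case=> K [P [g [f [QP [gf K_res]]]]]; exists K, P, g, f.
by split; [apply: QQ' | split=> //; apply: IH].
Qed.

Lemma res_fin_gen j M : res (@fg_projective R) j M -> fin_gen M.
Proof.
case: j => [|j] /=.
  by case=> P [f [[P_fg _] [_ f_surj]]]; apply: fin_gen_surj P_fg f_surj.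
by case=> K [P [g [f [[P_fg _] [gf _]]]]]; apply: fin_gen_surj P_fg gf.2.2.
Qed.

Lemma P_lt_fin_gen k M : P_lt (Fin k.+1) M -> fin_gen M.
Proof. by case=> j [_ /res_fin_gen]. Qed.

Lemma P_lt_pd_le k M : P_lt (Fin k.+1) M -> pd_le (Fin k) M.
Proof. by case=> j [jk M_res]; exists j; split=> //; apply: res_weaken M_res => P []. Qed.

Lemma res0_trivial M : (forall x : M, x = 0) -> res (@fg_projective R) 0 M.
Proof.
move=> M0; exists M, idfun; split; last by split=> // y; exists y.
split; first by exists [::] => x; exists (fun=> 0); rewrite big_ord0 [x]M0.
by move=> B C g h _; exists \0 => x; rewrite [x]M0 !linear0.
Qed.

Lemma P_lt_mono (a b : enat) M : ele a b -> P_lt a M -> P_lt b M.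
Proof.
case: a => [[|k]|]; case: b => [[|m]|] //= km.
- by move=> M0; exists 0; split=> //; apply: res0_trivial.
- by move=> M0; exists 0; apply: res0_trivial.
- by case=> j [jk M_res]; exists j; split=> //; apply: leq_trans jk km.
- by case=> j [_ M_res]; exists j.
Qed.

Lemma P_lt_regular k : P_lt (Fin k.+1) (R^o : lmodType R).
Proof.
exists 0; split=> //; exists R^o, idfun; split; last by split=> // y; exists y.
split.
  exists [:: (1 : R^o)] => x; exists (fun=> x).
  by rewrite big_ord1 /= [RHS]/GRing.scale /= mulr1.
move=> B C g h g_surj; have [b gb] := g_surj (h 1).
have bL : linear (fun r : R^o => (r : R) *: b) by move=> a u v; rewrite scalerDl scalerA.
exists (linear_of bL) => x /=; rewrite linearZ_LR gb -(linearZ_LR h).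
by congr (h _); rewrite [LHS]/GRing.scale /= mulr1.
Qed.

Lemma n_exact_mono (a b : enat) (A B C : lmodType R)
    (f : {linear A -> B}) (g : {linear B -> C}) :
  ele a b -> n_exact b f g -> n_exact a f g.
Proof.
move=> ab [gf hom]; split=> // M M_P; apply: hom; apply: P_lt_mono M_P.
by case: a b ab => [k|] [m|].
Qed.

Lemma hom_exact_of_lift M (A B C : lmodType R) (f : {linear A -> B}) (g : {linear B -> C}) :
    ses f g ->
    (forall h : {linear M -> C}, exists k : {linear M -> B}, forall x, g (k x) = h x) ->
  hom_exact M f g.
Proof.
move=> fg lift; have [f_inj [fg_ker _]] := fg; split=> //.
  by move=> k1 k2 fk x; apply: f_inj.
move=> h; split=> [gh0 | [k kE] x]; last by rewrite -kE (ses_comp_eq0 _ fg).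
by apply: lift_through_injective => // x; apply/fg_ker.
Qed.

End FinitePresentations.

Section UniversalSequence.
Variables (R : pzRingType) (n : nat) (M : lmodType R).

Record realization (r : (nat -> R) -> Prop) := Realization {
  real_mod : lmodType R;
  real_gens : seq real_mod;
  real_P_lt : P_lt (Fin n.+1) real_mod;
  real_spans : spans real_gens;
  real_rel : forall c, lincomb real_gens c = 0 <-> r c }.

(* A map [h : N -> M] with [N] in [P^{<n+1}] is recorded, up to isomorphism, by
   the relations [r] among a spanning list of [N] and the images in [M] of that
   list; this makes the class of all such maps a set. *)
Definition summand_index := {i : seq M * ((nat -> R) -> Prop) |
  exists _ : realization i.2, forall c, i.2 c -> lincomb i.1 c = 0}.
HB.instance Definition _ := gen_eqMixin summand_index.
HB.instance Definition _ := gen_choiceMixin summand_index.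

Definition summand_real (i : summand_index) : realization (sval i).2 :=
  projT1 (cid (proj2_sig i)).

Definition summand i : lmodType R := real_mod (summand_real i).

Lemma summand_map_ex i : exists h : {linear summand i -> M},
  forall c, h (lincomb (real_gens (summand_real i)) c) = lincomb (sval i).1 c.
Proof.
apply: extend_generators; first exact: real_spans.
by move=> c /(real_rel _ c); apply: (projT2 (cid (proj2_sig i))).
Qed.

Definition summand_map i : {linear summand i -> M} := projT1 (cid (summand_map_ex i)).

Lemma summand_mapE i c :
  summand_map i (lincomb (real_gens (summand_real i)) c) = lincomb (sval i).1 c.
Proof. by rewrite /summand_map; case: cid. Qed.

Definition univ := dsum summand.
Definition univ_map : {linear univ -> M} := dsum_rec summand_map.

Lemma univ_lift N : P_lt (Fin n.+1) N ->
  forall h : {linear N -> M}, exists k : {linear N -> univ}, forall z, univ_map (k z) = h z.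
Proof.
move=> N_P h; have [s s_span] := fin_gen_spans (P_lt_fin_gen N_P).
pose r c := lincomb s c = 0.
have h_rel c : r c -> lincomb (map h s) c = 0 by rewrite /r lincomb_map => ->; rewrite linear0.
pose i : summand_index :=
  exist _ (map h s, r) (ex_intro _ (Realization N_P s_span (fun c => iff_refl (r c))) h_rel).
have [phi phiE] : exists phi : {linear N -> summand i},
    forall c, phi (lincomb s c) = lincomb (real_gens (summand_real i)) c.
  by apply: extend_generators => // c rc; apply/(real_rel (summand_real i) c).
exists (@dinj _ _ summand i \o phi) => z; have [c ->] := s_span z.
by rewrite /univ_map /= dsum_rec_dinj phiE summand_mapE lincomb_map.
Qed.

Lemma univ_n_exact : n_exact (Fin n) (kernel_incl univ_map) univ_map.
Proof.
have univ_surj : surj univ_map.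
  move=> y; have yL : linear (fun r : R^o => (r : R) *: y).
    by move=> a u v; rewrite scalerDl scalerA.
  have [k kE] := univ_lift (P_lt_regular R n) (linear_of yL).
  by exists (k 1); rewrite kE /= scale1r.
have ses_univ := ses_kernel univ_surj.
split=> // N N_P; apply: hom_exact_of_lift => // h.
exact: univ_lift N_P h.
Qed.

(* A splitting of [univ_map] only involves finitely many summands, because [M]
   is finitely generated; so the identity of [M] is a finite factor sum. *)
Lemma syzygy_proj_of_univ_section (sigma : {linear M -> univ}) :
  fin_gen M -> (forall x, univ_map (sigma x) = x) -> syzygy_proj n M.
Proof.
move=> M_fg sigmaK; have [xs xs_span] := fin_gen_spans M_fg.
pose J := undup (flatten [seq dsupp (sigma x) | x <- xs]).
have sigmaJ x i : i \notin J -> dproj i (sigma x) = 0.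
  move=> iJ; have [c ->] := xs_span x.
  have xs0 y : y \in xs -> dproj i (sigma y) = 0.
    move=> y_xs; apply: dproj_dsupp; apply: contra iJ => iy.
    by rewrite mem_undup; apply/flattenP; exists (dsupp (sigma y)) => //; apply: map_f.
  rewrite -[dproj i _]/((dproj i \o sigma) _) -lincomb_map /lincomb big1 // => k _.
  have k_xs : (k < size xs)%N by rewrite -(size_map (dproj i \o sigma)).
  by rewrite (nth_map 0) //= xs0 ?scaler0 ?mem_nth.
pose pf i := PdFactor (dproj i \o sigma) (summand_map i)
  (P_lt_pd_le (real_P_lt (summand_real i))).
apply: (@syzygy_proj_of_factor_sum _ _ _ (map pf J)).
apply: eq_liftable (@liftable0 _ M M) => x.
rewrite /factor_sum big_map /= -(dsum_recE summand_map (undup_uniq _) (sigmaJ x)).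
by rewrite -[dsum_rec_fun _ _]/(univ_map _) sigmaK subrr.
Qed.

Lemma P_lt_of_E_succ :
    (forall (A B C : lmodType R) (f : {linear A -> B}) (g : {linear B -> C}),
       n_exact (Fin n) f g -> n_exact (Fin n.+1) f g) ->
  P_lt (Fin n.+2) M -> P_lt (Fin n.+1) M.
Proof.
move=> E M_P; have [_ univ_hom] := E _ _ _ _ _ univ_n_exact.
have [_ _ /(_ idfun) [sigma sigmaK]] := univ_hom M M_P.
have [j [_ M_res]] := M_P.
have M_syz := syzygy_proj_of_univ_section (P_lt_fin_gen M_P) sigmaK.
by have [k kn M_res'] := fg_res_shorten M_res M_syz; exists k.
Qed.

End UniversalSequence.

Section Equivalences.
Variables (R : pzRingType) (n : nat).

Lemma P_lt_of_lfPD_le (N : lmodType R) : lfPD_le R (Fin n) -> P_lt Inf N -> P_lt (Fin n.+1) N.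
Proof.
move=> pd [L N_res].
have [j jn N_res'] := fg_res_shorten N_res (pd_le_syzygy_proj (pd N (ex_intro _ L N_res))).
by exists j.
Qed.

Lemma E_eq_of_lfPD_le : lfPD_le R (Fin n) -> forall m, ele (Fin n.+1) m -> E_eq R (Fin n) m.
Proof.
move=> pd m nm A B C f g; split; last by apply: n_exact_mono; case: m nm => //= k /ltnW.
case=> fg hom; split=> // N N_P; apply: hom; apply: P_lt_of_lfPD_le pd _.
by apply: P_lt_mono N_P; case: (esucc m).
Qed.

Lemma lfPD_le_of_E_eq m : ele (Fin n.+1) m -> E_eq R (Fin n) m -> lfPD_le R (Fin n).
Proof.
move=> nm E N [L N_res]; apply: P_lt_pd_le.
have E_succ (A B C : lmodType R) (f : {linear A -> B}) (g : {linear B -> C}) :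
    n_exact (Fin n) f g -> n_exact (Fin n.+1) f g.
  by move=> /E; apply: n_exact_mono.
elim: L N N_res => [|L IH] N; first by exists 0.
case=> K [P [g [f [P_fgp [gf K_res]]]]]; apply: P_lt_of_E_succ E_succ _.
have [j [jn K_res']] := IH K K_res.
by exists j.+1; split=> //; exists K, P, g, f.
Qed.

End Equivalences.

Theorem theorem2p5 (R : pzRingType) (n : enat) :
  [/\ (lfPD_le R n <-> E_eq R n (esucc n)),
      (lfPD_le R n <-> exists m, ele (esucc n) m /\ E_eq R n m),
      (lfPD_le R n <-> forall m, ele (esucc n) m -> E_eq R n m)
    & (lfPD_le R n <-> E_eq R n Inf)].
Proof.
case: n => [k|] /=; last first.
  have pdInf : lfPD_le R Inf by [].
  have EInf : E_eq R Inf Inf by [].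
  by split; split=> // _; [exists Inf | case].
have kk : ele (Fin k.+1) (Fin k.+1) by rewrite /= leqnn.
have kInf : ele (Fin k.+1) Inf by [].
split; split=> [/E_eq_of_lfPD_le pd | E].
- exact: pd.
- exact: lfPD_le_of_E_eq kk E.
- by exists (Fin k.+1); split=> //; apply: pd.
- by case: E => m [km E]; apply: lfPD_le_of_E_eq km E.
- exact: pd.
- exact: lfPD_le_of_E_eq kk (E (Fin k.+1) kk).
- exact: pd.
- exact: lfPD_le_of_E_eq kInf E.
Qed.
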